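(* Let $S$ be a monoid and let $A\xrightarrow{f}B\xrightarrow{g}C$ be a Rees short exact sequence of right $S$-acts. Then $B_S$ is artinian (resp. noetherian, Rees artinian, Rees noetherian) if and only if both $A_S$ and $C_S$ are artinian (resp. noetherian, Rees artinian, Rees noetherian).
   Context: A sequence $A\xrightarrow{f}B\xrightarrow{g}C$ of $S$-act homomorphisms is a Rees short exact sequence if $f$ is injective, $g$ is surjective, and $\ker g=\mathcal K_{\mathrm{Im} f}$, where $\ker g=\{(b,b'):g(b)=g(b')\}$ and $\mathcal K_{\mathrm{Im}f}=(f(A)\times f(A))\cup\Delta_B$ with $\Delta_B=\{(b,b):b\in B\}$. A right $S$-act is artinian (noetherian) if its lattice of congruences satisfies the descending (ascending) chain condition; Rees artinian (Rees noetherian) if its subacts satisfy the descending (ascending) chain condition. *)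

Record monoid := Monoid {
  mcarrier :> Type;
  mmul : mcarrier -> mcarrier -> mcarrier;
  mone : mcarrier;
  mmulA : forall x y z, mmul x (mmul y z) = mmul (mmul x y) z;
  mmul1s : forall x, mmul mone x = x;
  mmuls1 : forall x, mmul x mone = x
}.

Record ract (S : monoid) := RAct {
  acarrier :> Type;
  aact : acarrier -> S -> acarrier;
  aact1 : forall x, aact x (mone S) = x;
  aactM : forall x s t, aact (aact x s) t = aact x (mmul S s t)
}.
Arguments aact {S} _ _ _.

Definition is_hom {M : monoid} (X Y : ract M) (h : X -> Y) : Prop :=
  forall x s, h (aact X x s) = aact Y (h x) s.

Definition is_congruence {M : monoid} (X : ract M) (r : X -> X -> Prop) : Prop :=
  (forall x, r x x) /\ (forall x y, r x y -> r y x) /\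
  (forall x y z, r x y -> r y z -> r x z) /\
  (forall x y s, r x y -> r (aact X x s) (aact X y s)).

(* Subacts: subsets closed under the action (the empty set is allowed; this
   does not affect the chain conditions). *)
Definition is_subact {M : monoid} (X : ract M) (P : X -> Prop) : Prop :=
  forall x s, P x -> P (aact X x s).

Definition artinian {M : monoid} (X : ract M) : Prop :=
  forall r : nat -> X -> X -> Prop,
    (forall n, is_congruence X (r n)) ->
    (forall n x y, r (S n) x y -> r n x y) ->
    exists N, forall n, N <= n -> forall x y, r n x y <-> r N x y.

Definition noetherian {M : monoid} (X : ract M) : Prop :=
  forall r : nat -> X -> X -> Prop,
    (forall n, is_congruence X (r n)) ->
    (forall n x y, r n x y -> r (S n) x y) ->
    exists N, forall n, N <= n -> forall x y, r n x y <-> r N x y.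

Definition rees_artinian {M : monoid} (X : ract M) : Prop :=
  forall P : nat -> X -> Prop,
    (forall n, is_subact X (P n)) ->
    (forall n x, P (S n) x -> P n x) ->
    exists N, forall n, N <= n -> forall x, P n x <-> P N x.

Definition rees_noetherian {M : monoid} (X : ract M) : Prop :=
  forall P : nat -> X -> Prop,
    (forall n, is_subact X (P n)) ->
    (forall n x, P n x -> P (S n) x) ->
    exists N, forall n, N <= n -> forall x, P n x <-> P N x.

Definition rees_ses {M : monoid} (A B C : ract M) (f : A -> B) (g : B -> C) : Prop :=
  is_hom A B f /\ is_hom B C g /\
  (forall a a', f a = f a' -> a = a') /\
  (forall c, exists b, g b = c) /\
  (forall b b', g b = g b' <->
     (((exists a, f a = b) /\ (exists a', f a' = b')) \/ b = b')).

From Stdlib Require Import Lia RelationClasses Program.Basics.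

(* All four chain conditions are instances of one abstract
   notion: every ascending chain of "valid" elements (congruences, resp.
   subacts) of a preordered type eventually stabilizes; the descending
   conditions are the ascending ones for the reversed preorder.  The abstract
   part of the file proves the three-term principle: if L receives
   order-reflecting embeddings from LA and LC, and two monotone maps
   L -> LA, L -> LC jointly reflect the order on comparable elements, then L
   satisfies ACC (DCC) iff LA and LC do.  For congruences: a congruence on A is extended to B by the
   identity outside f(A), a congruence on C is pulled back along g, and a
   congruence on B is restricted along f and pushed to C after joining it with
   the Rees congruence of f(A).  For subacts: image along f, preimage along g,
   preimage along f and image along g. *)

Definition stable_chains {L : Type} (valid : L -> Prop) (le : L -> L -> Prop)
  : Prop :=
  forall u : nat -> L, (forall n, valid (u n)) -> (forall n, le (u n) (u (S n))) ->
  exists N, forall n, N <= n -> le (u n) (u N) /\ le (u N) (u n).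

Definition ascending_cc {L : Type} (valid : L -> Prop) (le : L -> L -> Prop)
  : Prop := stable_chains valid le.

Definition descending_cc {L : Type} (valid : L -> Prop) (le : L -> L -> Prop)
  : Prop := stable_chains valid (flip le).

Lemma chain_le {L : Type} (le : L -> L -> Prop) `{PreOrder L le} (u : nat -> L) :
  (forall n, le (u n) (u (S n))) -> forall m n, m <= n -> le (u m) (u n).
Proof.
  intros step m n Hmn; induction Hmn as [|n _ IH]; [reflexivity|].
  transitivity (u n); auto.
Qed.

Section ChainTransfer.
Context {L L1 L2 : Type} {valid : L -> Prop} {valid1 : L1 -> Prop}
  {valid2 : L2 -> Prop} {le : L -> L -> Prop} {le1 : L1 -> L1 -> Prop}
  {le2 : L2 -> L2 -> Prop}.

Lemma stable_chains_embed (emb : L1 -> L2) :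
  (forall x, valid1 x -> valid2 (emb x)) ->
  (forall x y, le1 x y -> le2 (emb x) (emb y)) ->
  (forall x y, valid1 x -> valid1 y -> le2 (emb x) (emb y) -> le1 x y) ->
  stable_chains valid2 le2 -> stable_chains valid1 le1.
Proof.
  intros emb_valid emb_mono emb_refl cc2 u Hu step.
  destruct (cc2 (fun n => emb (u n))) as [N HN]; auto.
  exists N; intros n Hn; destruct (HN n Hn); auto.
Qed.

Lemma stable_chains_extension {le_pre : PreOrder le} {le1_pre : PreOrder le1}
  {le2_pre : PreOrder le2} (p1 : L -> L1) (p2 : L -> L2) :
  (forall x, valid x -> valid1 (p1 x)) -> (forall x, valid x -> valid2 (p2 x)) ->
  (forall x y, le x y -> le1 (p1 x) (p1 y)) ->
  (forall x y, le x y -> le2 (p2 x) (p2 y)) ->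
  (forall x y, valid x -> valid y -> le x y ->
     le1 (p1 y) (p1 x) -> le2 (p2 y) (p2 x) -> le y x) ->
  stable_chains valid1 le1 -> stable_chains valid2 le2 -> stable_chains valid le.
Proof.
  intros v1 v2 m1 m2 joint cc1 cc2 u Hu step.
  destruct (cc1 (fun n => p1 (u n))) as [N1 HN1]; auto.
  destruct (cc2 (fun n => p2 (u n))) as [N2 HN2]; auto.
  exists (max N1 N2); intros n Hn.
  assert (Hup : le (u (max N1 N2)) (u n)) by (apply chain_le; auto).
  split; auto; apply joint; auto.
  - transitivity (p1 (u N1)); [apply HN1 | apply HN1]; lia.
  - transitivity (p2 (u N2)); [apply HN2 | apply HN2]; lia.
Qed.

End ChainTransfer.

Section ThreeTerm.
Context {LA L LC : Type} {validA : LA -> Prop} {valid : L -> Prop}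
  {validC : LC -> Prop} {leA : LA -> LA -> Prop} {le : L -> L -> Prop}
  {leC : LC -> LC -> Prop}.
Context {leA_pre : PreOrder leA} {le_pre : PreOrder le} {leC_pre : PreOrder leC}.
Context {embA : LA -> L} {embC : LC -> L} {projA : L -> LA} {projC : L -> LC}.
Hypotheses
  (embA_valid : forall x, validA x -> valid (embA x))
  (embC_valid : forall x, validC x -> valid (embC x))
  (projA_valid : forall x, valid x -> validA (projA x))
  (projC_valid : forall x, valid x -> validC (projC x))
  (embA_mono : forall x y, leA x y -> le (embA x) (embA y))
  (embC_mono : forall x y, leC x y -> le (embC x) (embC y))
  (projA_mono : forall x y, le x y -> leA (projA x) (projA y))
  (projC_mono : forall x y, le x y -> leC (projC x) (projC y))
  (embA_refl : forall x y, validA x -> validA y -> le (embA x) (embA y) -> leA x y)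
  (embC_refl : forall x y, validC x -> validC y -> le (embC x) (embC y) -> leC x y)
  (proj_joint : forall x y, valid x -> valid y -> le x y ->
     leA (projA y) (projA x) -> leC (projC y) (projC x) -> le y x).

Lemma three_term_ascending :
  ascending_cc valid le <-> ascending_cc validA leA /\ ascending_cc validC leC.
Proof.
  split; [intros cc; split|intros [ccA ccC]].
  - exact (stable_chains_embed embA embA_valid embA_mono embA_refl cc).
  - exact (stable_chains_embed embC embC_valid embC_mono embC_refl cc).
  - exact (stable_chains_extension projA projC projA_valid projC_valid
             projA_mono projC_mono proj_joint ccA ccC).
Qed.

Lemma three_term_descending :
  descending_cc valid le <-> descending_cc validA leA /\ descending_cc validC leC.
Proof.
  unfold descending_cc; split; [intros cc; split|intros [ccA ccC]].
  - exact (stable_chains_embed (le1 := flip leA) (le2 := flip le) embA embA_valid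
      (fun x y => embA_mono y x) (fun x y hx hy => embA_refl y x hy hx) cc).
  - exact (stable_chains_embed (le1 := flip leC) (le2 := flip le) embC embC_valid
      (fun x y => embC_mono y x) (fun x y hx hy => embC_refl y x hy hx) cc).
  - exact (stable_chains_extension (le_pre := flip_PreOrder _)
      (le1_pre := flip_PreOrder _) (le2_pre := flip_PreOrder _) projA projC projA_valid projC_valid
      (fun x y => projA_mono y x) (fun x y => projC_mono y x)
      (fun x y hx hy => proj_joint y x hy hx) ccA ccC).
Qed.

Lemma three_term_principle :
  (ascending_cc valid le <-> ascending_cc validA leA /\ ascending_cc validC leC) /\
  (descending_cc valid le <-> descending_cc validA leA /\ descending_cc validC leC).
Proof. split; [exact three_term_ascending | exact three_term_descending]. Qed.

End ThreeTerm.

Definition rel_le {X : Type} (r r' : X -> X -> Prop) : Prop :=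
  forall x y, r x y -> r' x y.

Definition set_le {X : Type} (P Q : X -> Prop) : Prop := forall x, P x -> Q x.

#[local] Instance rel_le_preorder (X : Type) : PreOrder (@rel_le X).
Proof. split; unfold rel_le; auto. Qed.

#[local] Instance set_le_preorder (X : Type) : PreOrder (@set_le X).
Proof. split; unfold set_le; auto. Qed.

Lemma noetherian_ascending {M : monoid} (X : ract M) :
  noetherian X <-> ascending_cc (is_congruence X) rel_le.
Proof.
  unfold noetherian, ascending_cc, stable_chains, rel_le.
  split; intros cc r Hr step; destruct (cc r Hr step) as [N HN];
    exists N; intros n Hn; firstorder.
Qed.

Lemma artinian_descending {M : monoid} (X : ract M) :
  artinian X <-> descending_cc (is_congruence X) rel_le.
Proof.
  unfold artinian, descending_cc, stable_chains, flip, rel_le.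
  split; intros cc r Hr step; destruct (cc r Hr step) as [N HN];
    exists N; intros n Hn; firstorder.
Qed.

Lemma rees_noetherian_ascending {M : monoid} (X : ract M) :
  rees_noetherian X <-> ascending_cc (is_subact X) set_le.
Proof.
  unfold rees_noetherian, ascending_cc, stable_chains, set_le.
  split; intros cc P HP step; destruct (cc P HP step) as [N HN];
    exists N; intros n Hn; firstorder.
Qed.

Lemma rees_artinian_descending {M : monoid} (X : ract M) :
  rees_artinian X <-> descending_cc (is_subact X) set_le.
Proof.
  unfold rees_artinian, descending_cc, stable_chains, flip, set_le.
  split; intros cc P HP step; destruct (cc P HP step) as [N HN];
    exists N; intros n Hn; firstorder.
Qed.

Definition rel_image {X Y : Type} (h : X -> Y) (r : X -> X -> Prop) : Y -> Y -> Prop :=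
  fun y y' => exists x x', h x = y /\ h x' = y' /\ r x x'.

Definition rel_preimage {X Y : Type} (h : X -> Y) (r : Y -> Y -> Prop) : X -> X -> Prop :=
  fun x x' => r (h x) (h x').

Definition set_image {X Y : Type} (h : X -> Y) (P : X -> Prop) : Y -> Prop :=
  fun y => exists x, h x = y /\ P x.

Definition set_preimage {X Y : Type} (h : X -> Y) (Q : Y -> Prop) : X -> Prop :=
  fun x => Q (h x).

Lemma rel_image_mono {X Y : Type} (h : X -> Y) (r r' : X -> X -> Prop) :
  rel_le r r' -> rel_le (rel_image h r) (rel_image h r').
Proof. intros le_rr' y y' (x & x' & ex & ex' & Hr); exists x, x'; auto. Qed.

Lemma rel_preimage_mono {X Y : Type} (h : X -> Y) (r r' : Y -> Y -> Prop) :
  rel_le r r' -> rel_le (rel_preimage h r) (rel_preimage h r').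
Proof. intros le_rr' x x'; apply le_rr'. Qed.

Lemma set_image_mono {X Y : Type} (h : X -> Y) (P P' : X -> Prop) :
  set_le P P' -> set_le (set_image h P) (set_image h P').
Proof. intros le_PP' y (x & ex & HP); exists x; auto. Qed.

Lemma set_preimage_mono {X Y : Type} (h : X -> Y) (Q Q' : Y -> Prop) :
  set_le Q Q' -> set_le (set_preimage h Q) (set_preimage h Q').
Proof. intros le_QQ' x; apply le_QQ'. Qed.

Lemma rel_preimage_reflect {X Y : Type} (h : X -> Y) (r r' : Y -> Y -> Prop) :
  (forall y, exists x, h x = y) ->
  rel_le (rel_preimage h r) (rel_preimage h r') -> rel_le r r'.
Proof.
  intros h_surj le_pre y y'.
  destruct (h_surj y) as [x <-], (h_surj y') as [x' <-]; apply le_pre.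
Qed.

Lemma set_preimage_reflect {X Y : Type} (h : X -> Y) (Q Q' : Y -> Prop) :
  (forall y, exists x, h x = y) ->
  set_le (set_preimage h Q) (set_preimage h Q') -> set_le Q Q'.
Proof. intros h_surj le_pre y; destruct (h_surj y) as [x <-]; apply le_pre. Qed.

Lemma set_image_reflect {X Y : Type} (h : X -> Y) (P P' : X -> Prop) :
  (forall x x', h x = h x' -> x = x') ->
  set_le (set_image h P) (set_image h P') -> set_le P P'.
Proof.
  intros h_inj le_img x HP.
  destruct (le_img (h x)) as (x' & ex & HP'); [exists x; auto|].
  rewrite <- (h_inj _ _ ex); exact HP'.
Qed.

Lemma rel_preimage_congruence {M : monoid} (X Y : ract M) (h : X -> Y)
  (r : Y -> Y -> Prop) :
  is_hom X Y h -> is_congruence Y r -> is_congruence X (rel_preimage h r).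
Proof.
  intros h_hom (r_refl & r_sym & r_trans & r_compat); unfold rel_preimage.
  repeat split; eauto.
  intros x x' s Hr; rewrite !h_hom; auto.
Qed.

Lemma set_preimage_subact {M : monoid} (X Y : ract M) (h : X -> Y) (Q : Y -> Prop) :
  is_hom X Y h -> is_subact Y Q -> is_subact X (set_preimage h Q).
Proof. intros h_hom HQ x s Hx; unfold set_preimage; rewrite h_hom; auto. Qed.

Lemma set_image_subact {M : monoid} (X Y : ract M) (h : X -> Y) (P : X -> Prop) :
  is_hom X Y h -> is_subact X P -> is_subact Y (set_image h P).
Proof.
  intros h_hom HP y s (x & <- & Hx); exists (aact X x s); rewrite h_hom; auto.
Qed.

Section ReesShortExactSequence.
Context {M : monoid} {A B C : ract M} (f : A -> B) (g : B -> C).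
Hypotheses (f_hom : is_hom A B f) (g_hom : is_hom B C g)
  (f_inj : forall a a', f a = f a' -> a = a')
  (g_surj : forall c, exists b, g b = c)
  (ker_g : forall b b', g b = g b' <->
     (((exists a, f a = b) /\ (exists a', f a' = b')) \/ b = b')).

Lemma ker_g_cases b b' : g b = g b' ->
  (exists a a', f a = b /\ f a' = b') \/ b = b'.
Proof. intros e; apply ker_g in e as [[[a ea] [a' ea']] | e]; eauto. Qed.

Definition extend_cong (r : A -> A -> Prop) : B -> B -> Prop :=
  fun b b' => rel_image f r b b' \/ b = b'.

Lemma extend_cong_congruence r : is_congruence A r -> is_congruence B (extend_cong r).
Proof.
  intros (r_refl & r_sym & r_trans & r_compat); unfold extend_cong, rel_image.
  repeat split.
  - right; reflexivity.
  - intros b b' [(a & a' & <- & <- & Hr) | <-]; [left; exists a', a | right]; auto.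
  - intros b b' b'' [(a & a' & <- & <- & Hr) | <-] [(c & c' & ec & <- & Hr') | <-].
    + apply f_inj in ec as ->; left; exists a, c'; eauto.
    + left; exists a, a'; auto.
    + left; exists c, c'; auto.
    + right; reflexivity.
  - intros b b' s [(a & a' & <- & <- & Hr) | <-]; [left | right; auto].
    exists (aact A a s), (aact A a' s); rewrite !f_hom; auto.
Qed.

(* On f(A) the extension is the original congruence, so extension reflects
   inclusion. *)
Lemma extend_cong_reflect r r' : is_congruence A r' ->
  rel_le (extend_cong r) (extend_cong r') -> rel_le r r'.
Proof.
  intros (r'_refl & _) le_ext a a' Hr.
  destruct (le_ext (f a) (f a')) as [(c & c' & ec & ec' & Hr') | e];
    [left; exists a, a'; auto | | ].
  - apply f_inj in ec as ->; apply f_inj in ec' as ->; exact Hr'.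
  - apply f_inj in e as ->; apply r'_refl.
Qed.

(* The join of a congruence r on B with the Rees congruence of f(A): it also
   relates two elements that are r-related to elements of f(A). *)
Definition rees_join (r : B -> B -> Prop) : B -> B -> Prop :=
  fun b b' => r b b' \/ exists a a', r b (f a) /\ r b' (f a').

Lemma rees_join_congruence r : is_congruence B r -> is_congruence B (rees_join r).
Proof.
  intros (r_refl & r_sym & r_trans & r_compat); unfold rees_join.
  repeat split.
  - left; auto.
  - intros b b' [Hr | (a & a' & Ha & Ha')]; [left | right; exists a', a]; auto.
  - intros b b' b'' [Hr | (a & a' & Ha & Ha')] [Hr' | (c & c' & Hc & Hc')];
      [left; eauto | right; exists c, c' | right; exists a, a' | right; exists a, c'];
      split; eauto.
  - intros b b' s [Hr | (a & a' & Ha & Ha')]; [left; auto | right].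
    exists (aact A a s), (aact A a' s); rewrite !f_hom; auto.
Qed.

Lemma rees_join_ker r : is_congruence B r ->
  forall b b', g b = g b' -> rees_join r b b'.
Proof.
  intros (r_refl & _) b b' e.
  destruct (ker_g_cases b b' e) as [(a & a' & <- & <-) | <-]; unfold rees_join; eauto.
Qed.

Definition quotient_cong (r : B -> B -> Prop) : C -> C -> Prop :=
  rel_image g (rees_join r).

Lemma quotient_cong_congruence r : is_congruence B r -> is_congruence C (quotient_cong r).
Proof.
  intros Hr; unfold quotient_cong, rel_image.
  pose proof (rees_join_ker r Hr) as join_ker.
  destruct (rees_join_congruence r Hr) as (j_refl & j_sym & j_trans & j_compat).
  repeat split.
  - intros c; destruct (g_surj c) as [b <-]; exists b, b; auto.
  - intros c c' (b & b' & <- & <- & Hj); exists b', b; auto.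
  - intros c c' c'' (b & b' & <- & <- & Hj) (d & d' & ed & <- & Hj').
    exists b, d'; repeat split; eauto.
  - intros c c' s (b & b' & <- & <- & Hj).
    exists (aact B b s), (aact B b' s); rewrite !g_hom; auto.
Qed.

Lemma quotient_cong_mono r r' : rel_le r r' -> rel_le (quotient_cong r) (quotient_cong r').
Proof.
  intros le_rr'; apply rel_image_mono.
  intros b b' [Hr | (a & a' & Ha & Ha')]; [left | right; exists a, a']; auto.
Qed.

Lemma congruence_joint_reflect r r' : is_congruence B r -> is_congruence B r' ->
  rel_le r r' -> rel_le (rel_preimage f r') (rel_preimage f r) ->
  rel_le (quotient_cong r') (quotient_cong r) -> rel_le r' r.
Proof.
  intros Hr Hr' le_rr' le_res le_quo b b' Hr'bb'.
  pose proof (rees_join_ker r Hr) as join_ker.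
  destruct (rees_join_congruence r Hr) as (_ & _ & j_trans & _).
  assert (Hjoin : rees_join r b b').
  { destruct (le_quo (g b) (g b')) as (d & d' & ed & ed' & Hj);
      [exists b, b'; repeat split; left; exact Hr'bb' |].
    apply j_trans with d; [apply join_ker; auto|].
    apply j_trans with d'; [exact Hj | apply join_ker; auto]. }
  destruct Hr as (_ & r_sym & r_trans & _), Hr' as (_ & r'_sym & r'_trans & _).
  destruct Hjoin as [Hr | (a & a' & Ha & Ha')]; [exact Hr |].
  assert (Hfa : r (f a) (f a')).
  { apply le_res; unfold rel_preimage.
    apply r'_trans with b; [apply r'_sym, le_rr', Ha|].
    apply r'_trans with b'; [exact Hr'bb' | apply le_rr', Ha']. }
  apply r_trans with (f a); [exact Ha|].
  apply r_trans with (f a'); [exact Hfa | apply r_sym, Ha'].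
Qed.

Lemma extend_cong_mono r r' : rel_le r r' -> rel_le (extend_cong r) (extend_cong r').
Proof.
  intros le_rr' b b' [Hr | e]; [left; revert Hr; apply rel_image_mono | right]; auto.
Qed.

Lemma congruence_chain_conditions :
  (ascending_cc (is_congruence B) rel_le <->
     ascending_cc (is_congruence A) rel_le /\ ascending_cc (is_congruence C) rel_le) /\
  (descending_cc (is_congruence B) rel_le <->
     descending_cc (is_congruence A) rel_le /\ descending_cc (is_congruence C) rel_le).
Proof.
  exact (three_term_principle (embA := extend_cong) (embC := rel_preimage g)
    (projA := rel_preimage f) (projC := quotient_cong)
    extend_cong_congruence
    (fun s => rel_preimage_congruence B C g s g_hom)
    (fun r => rel_preimage_congruence A B f r f_hom)
    quotient_cong_congruence
    extend_cong_mono (rel_preimage_mono g) (rel_preimage_mono f) quotient_cong_mono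
    (fun r r' _ Hr' => extend_cong_reflect r r' Hr')
    (fun s s' _ _ => rel_preimage_reflect g s s' g_surj)
    congruence_joint_reflect).
Qed.

(* A subset of B is determined by its trace on f(A) and its image in C,
   because g is injective outside f(A). *)
Lemma subset_joint_reflect (P P' : B -> Prop) :
  set_le (set_preimage f P') (set_preimage f P) ->
  set_le (set_image g P') (set_image g P) -> set_le P' P.
Proof.
  intros le_res le_img b HP'.
  destruct (le_img (g b)) as (d & ed & HPd); [exists b; auto|].
  destruct (ker_g_cases d b ed) as [(a & a' & _ & <-) | <-]; [|exact HPd].
  apply le_res; exact HP'.
Qed.

Lemma subact_chain_conditions :
  (ascending_cc (is_subact B) set_le <->
     ascending_cc (is_subact A) set_le /\ ascending_cc (is_subact C) set_le) /\
  (descending_cc (is_subact B) set_le <->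
     descending_cc (is_subact A) set_le /\ descending_cc (is_subact C) set_le).
Proof.
  exact (three_term_principle (embA := set_image f) (embC := set_preimage g)
    (projA := set_preimage f) (projC := set_image g)
    (fun P => set_image_subact A B f P f_hom)
    (fun Q => set_preimage_subact B C g Q g_hom)
    (fun P => set_preimage_subact A B f P f_hom)
    (fun P => set_image_subact B C g P g_hom)
    (set_image_mono f) (set_preimage_mono g) (set_preimage_mono f) (set_image_mono g)
    (fun P P' _ _ => set_image_reflect f P P' f_inj)
    (fun Q Q' _ _ => set_preimage_reflect g Q Q' g_surj)
    (fun P P' _ _ _ => subset_joint_reflect P P')).
Qed.

End ReesShortExactSequence.

Theorem mainTheorem5 (S : monoid) (A B C : ract S) (f : A -> B) (g : B -> C) :
  rees_ses A B C f g ->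
  (artinian B <-> artinian A /\ artinian C) /\
  (noetherian B <-> noetherian A /\ noetherian C) /\
  (rees_artinian B <-> rees_artinian A /\ rees_artinian C) /\
  (rees_noetherian B <-> rees_noetherian A /\ rees_noetherian C).
Proof.
  intros (f_hom & g_hom & f_inj & g_surj & ker_g).
  destruct (congruence_chain_conditions f g f_hom g_hom f_inj g_surj ker_g)
    as [cong_acc cong_dcc].
  destruct (subact_chain_conditions f g f_hom g_hom f_inj g_surj ker_g)
    as [sub_acc sub_dcc].
  rewrite !artinian_descending, !noetherian_ascending,
    !rees_artinian_descending, !rees_noetherian_ascending.
  auto.
Qed.
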